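(* Let $n\geq 1$, let $G_1,\dots,G_n$ be groups, and let $G\leqslant G_1\times\dots\times G_n$ be a subgroup such that each projection $\pi_i:G\to G_i$ ($1\leqslant i\leqslant n$) is surjective. Then $G$ is a normal subgroup of $G_1\times\dots\times G_n$ if and only if $G$ has abelian entanglements with respect to $G_1\times\dots\times G_n$.
   Context: For a nonempty subset $S\subseteq\{1,\dots,n\}$, let $G_S$ denote the image of $G$ under the projection $G_1\times\dots\times G_n\to\prod_{i\in S}G_i$. For a partition $\mathcal{P}=\{S,T\}$ of $\{1,\dots,n\}$ into two nonempty sets, $G$ is naturally a subgroup of $G_S\times G_T$ surjecting onto both factors; put $N_S=\{x\in G_S:(x,1)\in G\}$, which is a normal subgroup of $G_S$, and define the Goursat quotient $Q_{\mathcal{P}}:=G_S/N_S$ (it is isomorphic to $G_T/N_T$, and $G=\{(x,y)\in G_S\times G_T:\psi_1(x)=\psi_2(y)\}$ for suitable surjections $\psi_1:G_S\to Q_{\mathcal P}$, $\psi_2:G_T\to Q_{\mathcal P}$). $G$ is said to have abelian entanglements with respect to $G_1\times\dots\times G_n$ if $Q_{\mathcal{P}}$ is abelian for every such two-set partition $\mathcal{P}$. *)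

From mathcomp Require Import all_boot.
Set Implicit Arguments. Unset Strict Implicit. Unset Printing Implicit Defensive.

Record group := Group {
  carrier :> Type;
  gmul : carrier -> carrier -> carrier;
  ginv : carrier -> carrier;
  gone : carrier;
  gmulA : forall x y z, gmul x (gmul y z) = gmul (gmul x y) z;
  gmul1 : forall x, gmul gone x = x;
  gmulV : forall x, gmul (ginv x) x = gone }.

Definition dprodT (I : Type) (Gs : I -> group) := forall i, carrier (Gs i).
Definition dmul I (Gs : I -> group) (x y : dprodT Gs) : dprodT Gs :=
  fun i => gmul (x i) (y i).
Definition dinv I (Gs : I -> group) (x : dprodT Gs) : dprodT Gs :=
  fun i => ginv (x i).
Definition done_ I (Gs : I -> group) : dprodT Gs := fun i => gone (Gs i).

Definition is_subgroup I (Gs : I -> group) (H : dprodT Gs -> Prop) : Prop :=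
  [/\ H (done_ Gs),
      forall x y, H x -> H y -> H (dmul x y)
    & forall x, H x -> H (dinv x)].

Definition is_normal I (Gs : I -> group) (H : dprodT Gs -> Prop) : Prop :=
  forall g x, H x -> H (dmul (dinv g) (dmul x g)).

Definition proj_surjective I (Gs : I -> group) (H : dprodT Gs -> Prop) : Prop :=
  forall i (a : Gs i), exists x, H x /\ x i = a.

Section Entangle.
Variables (n : nat) (Gs : 'I_n -> group) (H : dprodT Gs -> Prop) (S : {set 'I_n}).

Definition GsS : {i : 'I_n | i \in S} -> group := fun i => Gs (sval i).
Definition projS (x : dprodT Gs) : dprodT GsS := fun i => x (sval i).

Definition G_S (y : dprodT GsS) : Prop := exists x, H x /\ projS x = y.

(* N_S = { y in G_S : (y, 1) in G }. *)
Definition N_S (y : dprodT GsS) : Prop :=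
  G_S y /\ exists x, [/\ H x, projS x = y & forall i, i \notin S -> x i = gone (Gs i)].

End Entangle.
Arguments GsS : clear implicits.
Arguments projS : clear implicits.
Arguments G_S : clear implicits.
Arguments N_S : clear implicits.

Definition lcoset I (Gs : I -> group) (N : dprodT Gs -> Prop) (a : dprodT Gs) :
  dprodT Gs -> Prop := fun z => exists m, N m /\ z = dmul a m.
Definition setmul I (Gs : I -> group) (A B : dprodT Gs -> Prop) :
  dprodT Gs -> Prop := fun z => exists a b, [/\ A a, B b & z = dmul a b].

(* The Goursat quotient G_S / N_S is abelian: any two of its elements
   (cosets a N_S, b N_S with a, b in G_S) commute under the quotient
   (set-product) multiplication. *)
Definition goursat_quotient_abelian n (Gs : 'I_n -> group)
    (H : dprodT Gs -> Prop) (S : {set 'I_n}) : Prop :=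
  forall a b, G_S n Gs H S a -> G_S n Gs H S b ->
    forall z, setmul (lcoset (N_S n Gs H S) a) (lcoset (N_S n Gs H S) b) z <->
              setmul (lcoset (N_S n Gs H S) b) (lcoset (N_S n Gs H S) a) z.

Definition abelian_entanglements n (Gs : 'I_n -> group) (H : dprodT Gs -> Prop) : Prop :=
  forall S : {set 'I_n}, S != set0 -> ~: S != set0 -> goursat_quotient_abelian H S.

(** If G is normal and x_a, x_b are in G, then [x_a, r] lies in G, where r is
    x_b with its coordinates off S replaced by 1; it is trivial off S and its
    S-part is the commutator of the S-parts of x_a and x_b.  So N_S contains
    [G_S, G_S], and it is normal in G_S, whence G_S / N_S is abelian.
    Conversely, if the quotient for the partition {{i}, rest} is abelian, then
    for x, y in G we get x_i y_i = y_i u_i x_i u'_i with u, u' in G trivial off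
    i, so conjugating x by the i-th coordinate of y gives u x u', which lies in
    G.  By surjectivity of the projections every single-coordinate element
    arises this way, and these generate the product. *)

From Pilot Require Import Defs.
From Stdlib Require Import FunctionalExtensionality.
From mathcomp Require Import all_boot.
Set Implicit Arguments. Unset Strict Implicit. Unset Printing Implicit Defensive.

Declare Scope grp_scope.
Notation "x * y" := (gmul x y) : grp_scope.
Notation "x ^-1" := (ginv x) : grp_scope.
Notation "1" := (gone _) : grp_scope.
Local Open Scope grp_scope.

Section GroupTheory.
Variable K : group.
Implicit Types x y g h m : K.

Definition gconj x g := g^-1 * (x * g).
Definition gcomm x y := x^-1 * gconj x y.

Lemma mulKg x y : x^-1 * (x * y) = y.
Proof. by rewrite gmulA gmulV gmul1. Qed.

Lemma mulgV x : x * x^-1 = 1.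
Proof. by rewrite -{1}(mulKg x^-1 x) gmulV -gmulA gmul1 gmulV. Qed.

Lemma mulKVg x y : x * (x^-1 * y) = y.
Proof. by rewrite gmulA mulgV gmul1. Qed.

Lemma mulg1 x : x * 1 = x.
Proof. by rewrite -(gmulV x) mulKVg. Qed.

Lemma invg1 : 1^-1 = 1 :> K.
Proof. by rewrite -[LHS]mulg1 gmulV. Qed.

Lemma invMg g h : (g * h)^-1 = h^-1 * g^-1.
Proof.
have e : g * h * (h^-1 * g^-1) = 1 by rewrite -gmulA mulKVg mulgV.
by rewrite -[LHS]mulg1 -e mulKg.
Qed.

Lemma gconj1g g : gconj 1 g = 1.
Proof. by rewrite /gconj gmul1 gmulV. Qed.

Lemma gconjg1 x : gconj x 1 = x.
Proof. by rewrite /gconj invg1 gmul1 mulg1. Qed.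

Lemma gcommg1 x : gcomm x 1 = 1.
Proof. by rewrite /gcomm gconjg1 gmulV. Qed.

Lemma gconjM x g h : gconj x (g * h) = gconj (gconj x g) h.
Proof. by rewrite /gconj invMg -!gmulA !gmulA. Qed.

Lemma gconj_eq x y m : x * y = y * m -> gconj x y = m.
Proof. by rewrite /gconj => ->; rewrite mulKg. Qed.

Lemma mul_lcosetC a b m m' :
  (a * m) * (b * m') = (b * 1) * (a * (gcomm a b * (gconj m b * m'))).
Proof. by rewrite mulg1 /gcomm /gconj -!gmulA !mulKVg. Qed.

End GroupTheory.

Section ProductGroup.
Variables (I : Type) (Gs : I -> group).
Implicit Types x y z : dprodT Gs.

Lemma dmulA x y z : dmul x (dmul y z) = dmul (dmul x y) z.
Proof. by apply: functional_extensionality_dep => i; apply: gmulA. Qed.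

Lemma dmul1 x : dmul (done_ Gs) x = x.
Proof. by apply: functional_extensionality_dep => i; apply: gmul1. Qed.

Lemma dmulV x : dmul (dinv x) x = done_ Gs.
Proof. by apply: functional_extensionality_dep => i; apply: gmulV. Qed.

Canonical dprod_group := @Defs.Group (dprodT Gs) (@dmul I Gs) (@dinv I Gs) (done_ Gs)
  dmulA dmul1 dmulV.

Lemma dconjE x y i : gconj x y i = gconj (x i) (y i).
Proof. by []. Qed.

Lemma dcommE x y i : gcomm x y i = gcomm (x i) (y i).
Proof. by []. Qed.

Lemma lcoset_setmul (N : dprodT Gs -> Prop) a b :
  N 1 -> setmul (lcoset N a) (lcoset N b) (a * b).
Proof. by move=> N1; exists a, b; split; [exists 1; rewrite mulg1..|]. Qed.

Lemma lcoset_setmulC (A N : dprodT Gs -> Prop) :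
  N 1 -> (forall m m', N m -> N m' -> N (m * m')) ->
  (forall a b, A a -> A b -> N (gcomm a b)) ->
  (forall b m, A b -> N m -> N (gconj m b)) ->
  forall a b z, A a -> A b ->
    setmul (lcoset N a) (lcoset N b) z -> setmul (lcoset N b) (lcoset N a) z.
Proof.
move=> N1 NM Ncomm Nconj a b _ Aa Ab [_ [_ [[m [Nm ->]] [m' [Nm' ->]] ->]]].
exists (b * 1), (a * (gcomm a b * (gconj m b * m'))); split.
- by exists 1.
- by exists (gcomm a b * (gconj m b * m')); split; auto.
- exact: mul_lcosetC.
Qed.

Variable G : dprodT Gs -> Prop.

Definition normalizes (g : dprodT Gs) := forall x, G x -> G (gconj x g).

Lemma normalizes1 : normalizes 1.
Proof. by move=> x; rewrite gconjg1. Qed.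

Lemma normalizesM g h : normalizes g -> normalizes h -> normalizes (g * h).
Proof. by move=> ng nh x Gx; rewrite gconjM; auto. Qed.

Hypothesis Gsub : is_subgroup G.

Lemma subgroup1 : G 1.
Proof. by case: Gsub. Qed.

Lemma subgroupM x y : G x -> G y -> G (x * y).
Proof. by case: Gsub => _ GM _; apply: GM. Qed.

Lemma subgroupV x : G x -> G x^-1.
Proof. by case: Gsub => _ _ GV; apply: GV. Qed.

Lemma subgroup_normalizes g : G g -> normalizes g.
Proof. by move=> Gg x Gx; do !apply: subgroupM => //; apply: subgroupV. Qed.

End ProductGroup.

Section Restriction.
Variables (I : finType) (Gs : I -> group).
Implicit Types (S : {set I}) (g : dprodT Gs).

Definition restrict S g : dprodT Gs := fun j => if j \in S then g j else 1.

Definition supp_in S g := forall j, j \notin S -> g j = 1.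

Lemma restrict_set0 g : restrict set0 g = 1.
Proof. by apply: functional_extensionality_dep => j; rewrite /restrict inE. Qed.

Lemma restrict_setT g : restrict setT g = g.
Proof. by apply: functional_extensionality_dep => j; rewrite /restrict inE. Qed.

Lemma restrict_setU1 i S g :
  i \notin S -> restrict (i |: S) g = restrict [set i] g * restrict S g.
Proof.
move=> iNS; apply: functional_extensionality_dep => j; rewrite /= /dmul /restrict !inE.
have [->|_] := eqVneq j i; first by rewrite (negbTE iNS) mulg1.
by case: (j \in S); rewrite gmul1.
Qed.

Lemma restrict1_eq i g h : g i = h i -> restrict [set i] g = restrict [set i] h.
Proof.
move=> ghi; apply: functional_extensionality_dep => j; rewrite /restrict inE.
by have [->|] := eqVneq j i.
Qed.

Lemma normalizes_restrict (G : dprodT Gs -> Prop) :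
  (forall i g, normalizes G (restrict [set i] g)) ->
  forall S g, normalizes G (restrict S g).
Proof.
move=> norm1 S g; elim: {S}_.+1 {-2}S (ltnSn #|S|) => // m IH S.
have [-> _|[i Si]] := set_0Vmem S; first by rewrite restrict_set0; apply: normalizes1.
rewrite (cardsD1 i) Si ltnS => leSm.
rewrite -(setD1K Si) restrict_setU1 ?setD11 //.
exact: normalizesM (norm1 _ _) (IH _ leSm).
Qed.

Lemma normal_of_normalizes_restrict1 (G : dprodT Gs -> Prop) :
  (forall i g, normalizes G (restrict [set i] g)) -> is_normal G.
Proof.
by move=> norm1 g; rewrite -(restrict_setT g); apply: normalizes_restrict.
Qed.

End Restriction.

Section Goursat.
Variables (n : nat) (Gs : 'I_n -> group) (G : dprodT Gs -> Prop).
Hypothesis Gsub : is_subgroup G.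
Variable S : {set 'I_n}.

Local Notation projS := (projS n Gs S).
Local Notation G_S := (G_S n Gs G S).
Local Notation N_S := (N_S n Gs G S).

Lemma projS_restrict x : projS (restrict S x) = projS x.
Proof.
apply: functional_extensionality_dep => -[j jS].
by rewrite /projS /restrict /= jS.
Qed.

Lemma G_S_proj x : G x -> G_S (projS x).
Proof. by exists x. Qed.

Lemma N_S_proj u : G u -> supp_in S u -> N_S (projS u).
Proof. by move=> Gu uS; split; [exists u | exists u]. Qed.

Lemma N_S1 : N_S 1.
Proof. by apply: N_S_proj (subgroup1 Gsub) _. Qed.

Lemma N_SM m m' : N_S m -> N_S m' -> N_S (m * m').
Proof.
move=> [_ [u [Gu <- uS]]] [_ [u' [Gu' <- u'S]]].
apply: (N_S_proj (subgroupM Gsub Gu Gu')) => j jS.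
by rewrite /= /dmul uS // u'S // gmul1.
Qed.

Lemma goursat_quotient_abelian_of_normal :
  is_normal G -> goursat_quotient_abelian G S.
Proof.
move=> Gnormal.
have N_comm a b : G_S a -> G_S b -> N_S (gcomm a b).
  move=> [xa [Gxa <-]] [xb [Gxb <-]].
  rewrite -(projS_restrict xb); apply: (@N_S_proj (gcomm xa (restrict S xb))) => [|j jS].
    exact: subgroupM (subgroupV Gsub Gxa) (Gnormal _ _ Gxa).
  by rewrite dcommE /restrict (negbTE jS) gcommg1.
have N_conj b m : G_S b -> N_S m -> N_S (gconj m b).
  move=> [xb [_ <-]] [_ [u [Gu <- uS]]].
  apply: (@N_S_proj (gconj u xb)) => [|j jS]; first exact: Gnormal.
  by rewrite dconjE uS // gconj1g.
by move=> a b Ga Gb z; split; apply: (lcoset_setmulC N_S1 N_SM N_comm N_conj).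
Qed.

Lemma normalizes_restrict_of_abelian y :
  goursat_quotient_abelian G S -> G y -> normalizes G (restrict S y).
Proof.
move=> Sab Gy x Gx.
have := (Sab _ _ (G_S_proj Gx) (G_S_proj Gy) _).1 (lcoset_setmul _ _ N_S1).
move=> [_ [_ [[_ [[_ [u [Gu <- uS]]] ->]] [_ [[_ [u' [Gu' <- u'S]]] ->]] xy]]].
suff -> : gconj x (restrict S y) = u * (x * u').
  by apply: (subgroupM Gsub) => //; apply: (subgroupM Gsub).
apply: functional_extensionality_dep => j; rewrite dconjE /restrict.
case: ifPn => [jS | jNS]; last by rewrite gconjg1 /= /dmul uS // u'S // gmul1 mulg1.
apply: gconj_eq; have := congr1 (fun f => f (exist _ j jS)) xy.
by rewrite /= /dmul /projS /= -!gmulA.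
Qed.

End Goursat.

Lemma normalizes_restrict1_of_abelian n (Gs : 'I_n -> group) (G : dprodT Gs -> Prop) i y :
  is_subgroup G -> abelian_entanglements G -> G y -> normalizes G (restrict [set i] y).
Proof.
move=> Gsub Gab Gy; have [Ci0|Ci] := eqVneq (~: [set i]) set0.
  have -> : [set i] = setT by rewrite -[[set i]]setCK Ci0 setC0.
  by rewrite restrict_setT; apply: subgroup_normalizes.
apply: (normalizes_restrict_of_abelian Gsub) Gy.
by apply: Gab Ci; apply/set0Pn; exists i; rewrite inE.
Qed.

Theorem proposition2p3 (n : nat) (Gs : 'I_n -> group) (G : dprodT Gs -> Prop) :
  0 < n ->
  is_subgroup G ->
  proj_surjective G ->
  (is_normal G <-> abelian_entanglements G).
Proof.
move=> _ Gsub Gsurj; split => [Gnormal S _ _ | Gab].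
  exact: goursat_quotient_abelian_of_normal.
apply: normal_of_normalizes_restrict1 => i g.
have [y [Gy yi]] := Gsurj i (g i).
rewrite (restrict1_eq (esym yi)).
exact: normalizes_restrict1_of_abelian.
Qed.
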